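(* Let $\mathcal{Q}$ be a nonempty convex delta-matroid on a finite set $E$. Let $r=\max\{|S|:S\in\mathcal{Q}\}$, $s=\min\{|S|:S\in\mathcal{Q}\}$, $\ell=r-s$, let $\{1,\dots,\ell\}$ be $\ell$ new elements disjoint from $E$, $E^\flat=E\cup\{1,\dots,\ell\}$, and $\mathcal{Q}^\flat=\{S\subseteq E^\flat: |S|=r \text{ and } S\cap E\in\mathcal{Q}\}$. Then $\mathcal{Q}^\flat$ is the set of bases of a matroid on $E^\flat$.
   Context: $\mathcal{Q}\subseteq 2^E$ is convex if $S\subseteq T\subseteq S'$ with $S,S'\in\mathcal{Q}$ implies $T\in\mathcal{Q}$. $\mathcal{Q}$ is a delta-matroid if for all $A,B\in\mathcal{Q}$ and $e\in A\triangle B$ there is $f\in A\triangle B$ (possibly $f=e$) with $A\triangle\{e,f\}\in\mathcal{Q}$, where $\triangle$ is symmetric difference. *)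

From mathcomp Require Import all_boot.
Set Implicit Arguments. Unset Strict Implicit. Unset Printing Implicit Defensive.

Definition convex_family (T : finType) (Q : {set {set T}}) : Prop :=
  forall S U S' : {set T}, S \in Q -> S' \in Q ->
    S \subset U -> U \subset S' -> U \in Q.

Definition symdiff (T : finType) (A B : {set T}) : {set T} :=
  (A :\: B) :|: (B :\: A).

(* Delta-matroid: symmetric exchange axiom (f may equal e, in which case
   A symdiff {e,f} = A symdiff {e}). *)
Definition delta_matroid (T : finType) (Q : {set {set T}}) : Prop :=
  forall A B : {set T}, A \in Q -> B \in Q ->
    forall e, e \in symdiff A B ->
      exists2 f, f \in symdiff A B & symdiff A [set e; f] \in Q.

Definition matroid_bases (T : finType) (B : {set {set T}}) : Prop :=
  B != set0 /\
  forall B1 B2 : {set T}, B1 \in B -> B2 \in B ->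
    forall x, x \in B1 :\: B2 ->
      exists2 y, y \in B2 :\: B1 & (y |: (B1 :\ x)) \in B.

(* r = max size of a member of Q, s = min size of a member of Q
   (for nonempty Q; the initial value #|T| of the min is an upper bound
   for every size, so it does not affect the result). *)
Definition rmax (T : finType) (Q : {set {set T}}) : nat :=
  \max_(S in Q) #|S|.
Definition smin (T : finType) (Q : {set {set T}}) : nat :=
  \big[minn/#|T|]_(S in Q) #|S|.

(* The flattening on E^flat = E + {1..l} (as the disjoint sum T + 'I_l),
   where l = r - s; S \cap E is the preimage of S under inl. *)
Definition flat_family (T : finType) (Q : {set {set T}}) :
  {set {set (T + 'I_(rmax Q - smin Q))}} :=
  [set S : {set (T + 'I_(rmax Q - smin Q))} |
     (#|S| == rmax Q) && ((@inl T _ @^-1: S) \in Q)].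

From HB Require Import structures.
From mathcomp Require Import all_boot zify.
Set Implicit Arguments. Unset Strict Implicit. Unset Printing Implicit Defensive.

(* A convex delta-matroid has the augmentation property of the independent
   sets of a matroid: a member can be enlarged by an element of any larger
   member.  For an exchange B1 - x + y in Q^flat, either B2 \ B1 contains a
   new element, which leaves the trace on E unchanged, or B2 has at most as
   many new elements as B1 - x, hence a strictly larger trace on E, and that
   trace augments the trace of B1 - x.  When x lies in E, the symmetric
   exchange axiom first either removes x from the trace of B1 or trades it
   directly for an element of B2 \ B1. *)

Section SetFacts.
Variable T : finType.
Implicit Types (A : {set T}) (x y e f : T).

Lemma symdiff_set1 A x :
  symdiff A [set x] = if x \in A then A :\ x else x |: A.
Proof.
apply/setP => t; rewrite /symdiff.
by case: ifP => xA; rewrite !inE;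
  case: (eqVneq t x) => [->|] /=; rewrite ?xA ?andbT ?andbF ?orbF.
Qed.

Lemma symdiff_set2_out A e f :
  e \notin A -> symdiff A [set e; f] = e |: symdiff A [set f].
Proof.
move=> eA; apply/setP => t; rewrite /symdiff !inE.
by case: (eqVneq t e) => [->|] /=; rewrite ?(negbTE eA) ?andbT ?andbF ?orbF.
Qed.

Lemma symdiff_set2_in A e f :
  e \in A -> symdiff A [set e; f] = symdiff A [set f] :\ e.
Proof.
move=> eA; apply/setP => t; rewrite /symdiff !inE.
by case: (eqVneq t e) => [->|] /=; rewrite ?eA ?andbT ?andbF ?orbF.
Qed.

Lemma in_symdiff A B x : (x \in symdiff A B) = (x \in A :\: B) || (x \in B :\: A).
Proof. by rewrite /symdiff inE. Qed.

Lemma cards_exchange A x y :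
  x \in A -> y \notin A -> #|y |: (A :\ x)| = #|A|.
Proof. by move=> xA yA; rewrite cardsU1 !inE (negbTE yA) andbF (cardsD1 x A) xA. Qed.

End SetFacts.

Section ConvexDeltaMatroid.
Variables (T : finType) (Q : {set {set T}}).
Hypotheses (convexQ : convex_family Q) (deltaQ : delta_matroid Q).
Implicit Types (A : {set T}).

Lemma delta_insert A1 A2 e : A1 \in Q -> A2 \in Q -> e \in A2 :\: A1 ->
  e |: A1 \in Q \/ exists2 f, f \in A1 :\: A2 & e |: (A1 :\ f) \in Q.
Proof.
move=> QA1 QA2 eA21; have /setDP [_ eA1] := eA21.
have e_diff : e \in symdiff A1 A2 by rewrite in_symdiff eA21 orbT.
have [f] := deltaQ QA1 QA2 e_diff; rewrite in_symdiff => f_diff.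
rewrite symdiff_set2_out // symdiff_set1; case: ifPn => fA1 Qef.
  by right; exists f; case/orP: f_diff => // /setDP [_]; rewrite fA1.
left; apply: (convexQ QA1 Qef); first exact: subsetUr.
by rewrite setUCA subsetUr.
Qed.

Lemma delta_delete A1 A2 a : A1 \in Q -> A2 \in Q -> a \in A1 :\: A2 ->
  A1 :\ a \in Q \/ exists2 b, b \in A2 :\: A1 & b |: (A1 :\ a) \in Q.
Proof.
move=> QA1 QA2 aA12; have /setDP [aA1 _] := aA12.
have a_diff : a \in symdiff A1 A2 by rewrite in_symdiff aA12.
have [f] := deltaQ QA1 QA2 a_diff; rewrite in_symdiff => f_diff.
have [fA1 | fA1] := boolP (f \in A1).
  rewrite symdiff_set2_in // symdiff_set1 fA1 => Qfa.
  left; apply: (convexQ Qfa QA1); last exact: subD1set.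
  exact: setSD (subD1set A1 f).
rewrite setUC symdiff_set2_out // symdiff_set1 aA1 => Qfa.
by right; exists f; case/orP: f_diff => // /setDP []; rewrite (negbTE fA1).
Qed.

Lemma delta_augment A1 A2 : A1 \in Q -> A2 \in Q -> #|A1| < #|A2| ->
  exists2 y, y \in A2 :\: A1 & y |: A1 \in Q.
Proof.
move=> + QA2; have [n] := ubnP #|A2 :\: A1|; elim: n A1 => // n IH A1 le_n QA1 lt12.
have [e eA21] : exists e, e \in A2 :\: A1.
  apply/set0Pn; rewrite setD_eq0; apply: contraTN lt12 => /subset_leq_card.
  by rewrite -leqNgt.
have /setDP [eA2 eA1] := eA21.
have [QeA1 | [f fA12 Qswap]] := delta_insert QA1 QA2 eA21; first by exists e.
have /setDP [fA1 fA2] := fA12.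
set A1' := e |: (A1 :\ f) in Qswap.
(* A1' is closer to A2; augment it by induction, then trade f back in from A1. *)
have [y yA21' QyA1'] : exists2 y, y \in A2 :\: A1' & y |: A1' \in Q.
  apply: IH => //; last by rewrite cards_exchange.
  have sub : A2 :\: A1' \subset (A2 :\: A1) :\ e.
    apply/subsetP => t; rewrite !inE negb_or negb_and negbK.
    by case: (eqVneq t f) => [-> | _]; rewrite ?(negbTE fA2) ?andbF //= andbA.
  by move: le_n (subset_leq_card sub); rewrite (cardsD1 e (A2 :\: A1)) eA21; lia.
have /setDP [yA2 yA1'] := yA21'.
have ye : y != e by apply: contraNneq yA1' => ->; rewrite setU11.
have yf : y != f by apply: contraTneq yA2 => ->.
have yA1 : y \notin A1 by move: yA1'; rewrite !inE (negbTE ye) (negbTE yf).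
have fe : f != e by apply: contraNneq eA1 => <-.
have fA1y : f \in A1 :\: (y |: A1').
  by rewrite !inE eqxx fA1 (negbTE fe) eq_sym (negbTE yf).
have [Qf | [g gA1y Qg]] := delta_insert QyA1' QA1 fA1y.
  exists e => //; apply: (convexQ QA1 Qf); first exact: subsetUr.
  by rewrite /A1' setUCA (setUCA [set f]) setD1K // subsetUr.
case: (eqVneq g y) => [gy | g_ny]; last case: (eqVneq g e) => [ge | g_ne].
- exists e => //; move: Qg; rewrite gy setU1K //.
  by rewrite /A1' setUCA setD1K.
- exists y; first by rewrite inE yA1.
  move: Qg; rewrite ge /A1' setUCA setU1K; last first.
    by rewrite !inE eq_sym (negbTE ye) (negbTE eA1) andbF.
  by rewrite setUCA setD1K.
- move: gA1y; rewrite !inE (negbTE g_ny) (negbTE g_ne) /=.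
  by case/and3P => /negP gA1 _ /gA1.
Qed.

End ConvexDeltaMatroid.

Section SumSets.
Variables T U : finType.

Lemma card_inl_inr (S : {set T + U}) : #|S| = #|inl @^-1: S| + #|inr @^-1: S|.
Proof.
by rewrite -!sum1_card big_sumType; congr (_ + _); apply: eq_bigl => i; rewrite inE.
Qed.

Lemma preimset_inl_inl a : @inl T U @^-1: [set inl a] = [set a].
Proof. by apply/setP => b; rewrite !inE. Qed.

Lemma preimset_inl_inr j : @inl T U @^-1: [set inr j] = set0.
Proof. by apply/setP => b; rewrite !inE. Qed.

End SumSets.

Lemma exists_set_card (U : finType) k : k <= #|U| -> exists K : {set U}, #|K| = k.
Proof.
move=> le_k; exists [set:: take k (enum U)].
by rewrite cardsE (card_uniqP _) ?take_uniq ?enum_uniq // size_takel // -cardE.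
Qed.

Section Padding.
Variables (T U : finType) (Q : {set {set T}}) (r : nat).

Definition padded_family : {set {set T + U}} :=
  [set S : {set T + U} | (#|S| == r) && (inl @^-1: S \in Q)].

Lemma in_padded_family (S : {set T + U}) :
  (S \in padded_family) = (#|S| == r) && (inl @^-1: S \in Q).
Proof. by rewrite inE. Qed.

Lemma padded_family_neq0 A :
  A \in Q -> #|A| <= r <= #|A| + #|U| -> padded_family != set0.
Proof.
move=> QA /andP [le_A le_r].
have [K cardK] : exists K : {set U}, #|K| = r - #|A| by apply: exists_set_card; lia.
pose S := [set x : T + U | match x with inl a => a \in A | inr i => i \in K end].
have SA : inl @^-1: S = A by apply/setP => a; rewrite !inE.
have SK : inr @^-1: S = K by apply/setP => i; rewrite !inE.
apply/set0Pn; exists S; rewrite in_padded_family SA QA andbT card_inl_inr SA SK cardK.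
by apply/eqP; lia.
Qed.

Hypotheses (convexQ : convex_family Q) (deltaQ : delta_matroid Q).

Lemma padded_exchange_of_preimset B1 B2 x :
  B1 \in padded_family -> B2 \in padded_family -> x \in B1 :\: B2 ->
  inl @^-1: (B1 :\ x) \in Q ->
  exists2 y, y \in B2 :\: B1 & y |: (B1 :\ x) \in padded_family.
Proof.
rewrite !in_padded_family => /andP [/eqP cardB1 _] /andP [/eqP cardB2 QA2].
move=> /setDP [xB1 xB2]; set C := B1 :\ x => QC.
suff [y yB21 QyC] : exists2 y, y \in B2 :\: B1 & inl @^-1: (y |: C) \in Q.
  exists y => //; have /setDP [_ yB1] := yB21.
  by rewrite in_padded_family QyC andbT cards_exchange ?cardB1.
have [N2_sub | /subsetPn [j]] := boolP (inr @^-1: B2 \subset inr @^-1: C); last first.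
  rewrite !inE => jB2 jC; exists (inr j); last by rewrite preimsetU preimset_inl_inr set0U.
  have jx : inr j != x by apply: contraNneq xB2 => <-.
  by rewrite inE jB2 andbT; move: jC; rewrite jx.
have lt_C : #|inl @^-1: C| < #|inl @^-1: B2|.
  move: (subset_leq_card N2_sub) (card_inl_inr C) (card_inl_inr B2) (cardsD1 x B1).
  by rewrite xB1 cardB1 cardB2 -/C /=; lia.
have [b] := delta_augment convexQ deltaQ QC QA2 lt_C.
rewrite !inE => /andP [bC bB2] QbC.
exists (inl b); last by rewrite preimsetU preimset_inl_inl.
have bx : inl b != x by apply: contraNneq xB2 => <-.
by move: bC; rewrite !inE bx bB2 andbT.
Qed.

Lemma padded_exchange B1 B2 :
  B1 \in padded_family -> B2 \in padded_family -> forall x, x \in B1 :\: B2 ->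
  exists2 y, y \in B2 :\: B1 & y |: (B1 :\ x) \in padded_family.
Proof.
move=> PB1 PB2 x xB12.
move: (PB1) (PB2); rewrite !in_padded_family => /andP [/eqP cardB1 QA1] /andP [_ QA2].
case: x xB12 => [a | i] xB12; last first.
  by apply: padded_exchange_of_preimset; rewrite // preimsetD preimset_inl_inr setD0.
have aA12 : a \in inl @^-1: B1 :\: inl @^-1: B2 by move: xB12; rewrite !inE.
have [QA1a | [b bA21 Qb]] := delta_delete convexQ deltaQ QA1 QA2 aA12.
  by apply: padded_exchange_of_preimset; rewrite // preimsetD preimset_inl_inl.
move: xB12 bA21; rewrite !inE => /andP [_ aB1] /andP [bB1 bB2].
exists (inl b); first by rewrite inE bB1 bB2.
rewrite in_padded_family preimsetU preimsetD !preimset_inl_inl Qb andbT.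
by rewrite cards_exchange ?cardB1.
Qed.

End Padding.

(* minn has no unit on nat, so MathComp declares no monoid law for it; the
   semigroup law suffices for [big_rem_AC]. *)
HB.instance Definition _ := SemiGroup.isComLaw.Build nat minn minnA minnC.

Lemma smin_leq_card (T : finType) (Q : {set {set T}}) A : A \in Q -> smin Q <= #|A|.
Proof.
by move=> QA; rewrite /smin (big_rem_AC _ _ _ _ (mem_index_enum A)) QA geq_minl.
Qed.

Lemma card_leq_rmax (T : finType) (Q : {set {set T}}) A : A \in Q -> #|A| <= rmax Q.
Proof. exact: leq_bigmax_cond. Qed.

Theorem theorem4p12 (T : finType) (Q : {set {set T}}) :
  Q != set0 -> convex_family Q -> delta_matroid Q ->
  matroid_bases (flat_family Q).
Proof.
move=> /set0Pn [A QA] convexQ deltaQ; split; last exact: padded_exchange.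
apply: (padded_family_neq0 QA); rewrite card_ord.
by have := smin_leq_card QA; have := card_leq_rmax QA; lia.
Qed.
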